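(* Let $f$ be a probability density on $\mathbb{R}$ with $f\in\mathbb{L}_2$ and $f(x)=f(-x)$ for all $x\in\mathbb{R}$. Let $\Theta$ be a compact subset of $(0,1/2)\times(\mathbb{R}^2\setminus\Delta)$, where $\Delta=\{(x,x):x\in\mathbb{R}\}$, and let $\theta_0=(p_0,\alpha_0,\beta_0)\in\Theta$. Let $g(x)=p_0f(x-\alpha_0)+(1-p_0)f(x-\beta_0)$, $x\in\mathbb{R}$. For $\theta=(p,\alpha,\beta)\in\Theta$ and $u\in\mathbb{R}$ put $M(\theta,u)=pe^{iu\alpha}+(1-p)e^{iu\beta}$. Then, for $\theta\in\Theta$, we have $\mathrm{Im}\left(g^*(u)/M(\theta,u)\right)=0$ for all $u\in\mathbb{R}$ if and only if $\theta=\theta_0$.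
   Context: For an integrable function $f$, $f^*(u)=\int_{\mathbb{R}}e^{ixu}f(x)\,dx$ denotes its Fourier transform. Since $p<1/2$ on $\Theta$, $M(\theta,u)\neq 0$ for all $u$. *)

From HB Require Import structures.
From mathcomp Require Import all_boot all_order all_algebra.
From mathcomp Require Import all_classical all_reals all_analysis.
From mathcomp Require Import complex.
Set Implicit Arguments. Unset Strict Implicit. Unset Printing Implicit Defensive.
Import Order.TTheory GRing.Theory Num.Theory.
Import numFieldNormedType.Exports.
Local Open Scope classical_set_scope.
Local Open Scope ring_scope.

Definition cexpi {R : realType} (t : R) : R[i] := (cos t +i* sin t)%C.

(* Fourier transform f^*(u) = \int e^{ixu} f(x) dx, written out as
   \int cos(ux) f(x) dx + i \int sin(ux) f(x) dx (Lebesgue integral on R). *)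
Definition fourier {R : realType} (f : R -> R) (u : R) : R[i] :=
  ((Rintegral lebesgue_measure setT (fun x => cos (x * u) * f x))
     +i* (Rintegral lebesgue_measure setT (fun x => sin (x * u) * f x)))%C.

Definition prob_density {R : realType} (f : R -> R) : Prop :=
  measurable_fun setT f /\ (forall x, 0 <= f x) /\
  (\int[lebesgue_measure]_(x in setT) (f x)%:E = 1)%E.

Definition in_L2 {R : realType} (f : R -> R) : Prop :=
  measurable_fun setT f /\
  (\int[lebesgue_measure]_(x in setT) ((f x) ^+ 2)%:E < +oo)%E.

Definition Mth {R : realType} (th : R * R * R) (u : R) : R[i] :=
  let: (p, a, b) := th in
  (p%:C * cexpi (u * a) + (1 - p)%:C * cexpi (u * b))%C.

Definition mixture {R : realType} (f : R -> R) (th : R * R * R) (x : R) : R :=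
  let: (p, a, b) := th in p * f (x - a) + (1 - p) * f (x - b).

From HB Require Import structures.
From mathcomp Require Import all_boot all_order all_algebra.
From mathcomp Require Import all_classical all_reals all_analysis.
From mathcomp Require Import complex.
From mathcomp Require Import ring lra.
From mathcomp Require Import measurable_realfun lebesgue_integral_under.
Import Order.TTheory GRing.Theory Num.Theory.
Import numFieldNormedType.Exports.
Local Open Scope classical_set_scope.
Local Open Scope ring_scope.

(* Since f is even, its Fourier transform phi is real, so g^* = M(theta0, .) phi
   and Im (g^* / M(theta, .)) = phi Im (M(theta0, .) conj M(theta, .)) / |M(theta, .)|^2.
   For theta = theta0 this vanishes.  Conversely phi(0) = 1, so near 0 the
   trigonometric sum Im (M(theta0, u) conj M(theta, u)) = sum_j c_j sin (d_j u)
   vanishes identically, and differentiating at 0 kills all its odd moments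
   sum_j c_j d_j^(2k+1).  These are the odd moments of X - Y for independent
   two-point variables X ~ theta0, Y ~ theta; the first one equates the means, and
   those of order 3, 5, 7 then equate the cumulants of order 3, 5, 7 of X and Y,
   which determine (p, b - a) as long as p < 1/2. *)

Section cross_moments.
Context {R : realFieldType}.

Definition cross_pairs (th0 th : R * R * R) : seq (R * R) :=
  let: (p0, a0, b0) := th0 in let: (p, a, b) := th in
  [:: (p0 * p, a0 - a); (p0 * (1 - p), a0 - b);
      ((1 - p0) * p, b0 - a); ((1 - p0) * (1 - p), b0 - b)].

Definition cross_moment (th0 th : R * R * R) (n : nat) :=
  \sum_(cd <- cross_pairs th0 th) cd.1 * cd.2 ^+ n.

(* [two_point p m t] is the law with mass [p] at [m - (1 - p) t] and [1 - p] at
   [m + p t]: mean [m], spread [t].  [cumulantn p t] is its n-th cumulant, and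
   [cross_moment th0 th n] is the n-th moment of X - Y for independent X ~ th0,
   Y ~ th, so the [cross_moment*_two_point] identities are the moment-cumulant
   relations for X - Y when the means agree. *)
Definition two_point (p m t : R) : R * R * R := (p, m - (1 - p) * t, m + p * t).

Definition cumulant2 (p t : R) := p * (1 - p) * t ^+ 2.
Definition cumulant3 (p t : R) := p * (1 - p) * (2 * p - 1) * t ^+ 3.
Definition cumulant4 (p t : R) := p * (1 - p) * (1 - 6 * (p * (1 - p))) * t ^+ 4.
Definition cumulant5 (p t : R) := cumulant3 p t * (1 - 12 * (p * (1 - p))) * t ^+ 2.
Definition cumulant7 (p t : R) :=
  cumulant3 p t * (1 - 60 * (p * (1 - p)) + 360 * (p * (1 - p)) ^+ 2) * t ^+ 4.

Lemma cross_momentE (p0 a0 b0 p a b : R) n :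
  cross_moment (p0, a0, b0) (p, a, b) n =
  p0 * p * (a0 - a) ^+ n + p0 * (1 - p) * (a0 - b) ^+ n
  + (1 - p0) * p * (b0 - a) ^+ n + (1 - p0) * (1 - p) * (b0 - b) ^+ n.
Proof. by rewrite /cross_moment !big_cons big_nil addr0 /= !addrA. Qed.

Lemma two_pointE (p a b : R) : (p, a, b) = two_point p (p * a + (1 - p) * b) (b - a).
Proof. by rewrite /two_point; congr (_, _, _); ring. Qed.

Lemma cross_moment1 (p0 a0 b0 p a b : R) :
  cross_moment (p0, a0, b0) (p, a, b) 1 =
  (p0 * a0 + (1 - p0) * b0) - (p * a + (1 - p) * b).
Proof. by rewrite cross_momentE; ring. Qed.

Lemma cross_moment3_two_point (p0 t0 p t m : R) :
  cross_moment (two_point p0 m t0) (two_point p m t) 3 =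
  cumulant3 p0 t0 - cumulant3 p t.
Proof. by rewrite cross_momentE /cumulant3; ring. Qed.

Lemma cross_moment5_two_point (p0 t0 p t m : R) :
  cross_moment (two_point p0 m t0) (two_point p m t) 5 =
  cumulant5 p0 t0 - cumulant5 p t
  + 10 * (cumulant2 p0 t0 + cumulant2 p t) * (cumulant3 p0 t0 - cumulant3 p t).
Proof. by rewrite cross_momentE /cumulant5 /cumulant3 /cumulant2; ring. Qed.

Lemma cross_moment7_two_point (p0 t0 p t m : R) :
  cross_moment (two_point p0 m t0) (two_point p m t) 7 =
  cumulant7 p0 t0 - cumulant7 p t
  + 21 * (cumulant2 p0 t0 + cumulant2 p t) * (cumulant5 p0 t0 - cumulant5 p t)
  + (cumulant3 p0 t0 - cumulant3 p t) *
    (35 * (cumulant4 p0 t0 + cumulant4 p t)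
     + 105 * (cumulant2 p0 t0 + cumulant2 p t) ^+ 2).
Proof.
by rewrite cross_momentE /cumulant7 /cumulant5 /cumulant4 /cumulant3 /cumulant2; ring.
Qed.

Lemma mulr1B_inj (p0 p : R) : p0 <= 2^-1 -> p <= 2^-1 ->
  p0 * (1 - p0) = p * (1 - p) -> p0 = p.
Proof.
move=> hp0 hp e.
have : (p0 - p) * (1 - p0 - p) = 0 by rewrite -[RHS](subrr (p * (1 - p))) -{1}e; ring.
move/eqP; rewrite mulf_eq0 => /orP[/eqP|/eqP] h; lra.
Qed.

Lemma sqr_eq_of_cumulants57 {A0 A t0 t : R} :
  (1 - 12 * A0) * t0 ^+ 2 = (1 - 12 * A) * t ^+ 2 ->
  (1 - 60 * A0 + 360 * A0 ^+ 2) * t0 ^+ 4 = (1 - 60 * A + 360 * A ^+ 2) * t ^+ 4 ->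
  t0 ^+ 2 = t ^+ 2.
Proof.
move=> e5 e7.
have id7 (B s : R) : 2 * ((1 - 60 * B + 360 * B ^+ 2) * s ^+ 4) =
    5 * ((1 - 12 * B) * s ^+ 2) ^+ 2 - 3 * (s ^+ 2) ^+ 2 by ring.
have e4 : (t0 ^+ 2) ^+ 2 = (t ^+ 2) ^+ 2.
  by have := id7 A0 t0; rewrite e7 e5 id7; lra.
by apply/eqP; rewrite -(eqrXn2 (_ : 0 < 2)%N) ?sqr_ge0 ?e4.
Qed.

Lemma two_point_cumulants_inj (p0 t0 p t : R) :
  0 < p0 < 2^-1 -> 0 <= p <= 2^-1 -> t0 != 0 ->
  cumulant3 p0 t0 = cumulant3 p t -> cumulant5 p0 t0 = cumulant5 p t ->
  cumulant7 p0 t0 = cumulant7 p t -> p0 = p /\ t0 = t.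
Proof.
move=> /andP[p0_gt0 p0_lt] /andP[_ p_le] t0_neq0 e3 e5 e7.
have w0_neq0 : p0 * (1 - p0) * (2 * p0 - 1) != 0.
  by rewrite !mulf_neq0 //; apply/eqP; lra.
have k3_neq0 : cumulant3 p0 t0 != 0 by rewrite mulf_neq0 ?expf_neq0.
have r5 : (1 - 12 * (p0 * (1 - p0))) * t0 ^+ 2 = (1 - 12 * (p * (1 - p))) * t ^+ 2.
  by apply: (mulfI k3_neq0); move: e5; rewrite /cumulant5 -!(mulrA (cumulant3 _ _)) e3.
have r7 : (1 - 60 * (p0 * (1 - p0)) + 360 * (p0 * (1 - p0)) ^+ 2) * t0 ^+ 4 =
          (1 - 60 * (p * (1 - p)) + 360 * (p * (1 - p)) ^+ 2) * t ^+ 4.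
  by apply: (mulfI k3_neq0); move: e7; rewrite /cumulant7 -!(mulrA (cumulant3 _ _)) e3.
have t2 := sqr_eq_of_cumulants57 r5 r7.
have t2_neq0 : t ^+ 2 != 0 by rewrite -t2 expf_neq0.
have p0p : p0 = p.
  apply: mulr1B_inj => //; first lra.
  by move: r5; rewrite t2 => /(mulIf t2_neq0); lra.
split=> //; apply: (mulIf t2_neq0); rewrite -{1}t2 -!exprS.
by apply: (mulfI w0_neq0); move: e3; rewrite /cumulant3 -p0p.
Qed.

Lemma cross_moments_odd_eq0 (p0 a0 b0 p a b : R) :
  0 < p0 < 2^-1 -> 0 <= p <= 2^-1 -> a0 != b0 ->
  (forall k, cross_moment (p0, a0, b0) (p, a, b) k.*2.+1 = 0) ->
  (p0, a0, b0) = (p, a, b).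
Proof.
move=> hp0 hp ab0 m0.
have /eqP := m0 0%N; rewrite cross_moment1 subr_eq0 => /eqP mean.
move: m0; rewrite [(p0, a0, b0)]two_pointE [(p, a, b)]two_pointE -mean.
set m := _ + _; set t0 := b0 - a0; set t := b - a => m0.
have := m0 1%N; rewrite cross_moment3_two_point => /subr0_eq e3.
have := m0 2%N; rewrite cross_moment5_two_point e3 subrr mulr0 addr0 => /subr0_eq e5.
have := m0 3%N.
rewrite cross_moment7_two_point e3 e5 !subrr mulr0 mul0r !addr0 => /subr0_eq e7.
have t0_neq0 : t0 != 0 by rewrite subr_eq0 eq_sym.
by have [-> ->] := @two_point_cumulants_inj p0 t0 p t hp0 hp t0_neq0 e3 e5 e7.
Qed.
End cross_moments.

Section trigonometric_sums.
Context {R : realType}.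

Let is_derive_mull (d u : R) : is_derive u 1 (fun v => d * v) d.
Proof. by have := is_deriveZ d (is_derive_id u 1); rewrite /GRing.scale /= mulr1. Qed.

Lemma is_derive_sinZ (k d u : R) :
  is_derive u 1 (fun v => k * sin (d * v)) (k * d * cos (d * u)).
Proof.
have := is_deriveZ k (is_derive1_comp (is_derive_sin (d * u)) (is_derive_mull d u)).
by rewrite /GRing.scale /= => H; apply: (is_derive_eq H); ring.
Qed.

Lemma is_derive_cosZ (k d u : R) :
  is_derive u 1 (fun v => k * cos (d * v)) (- (k * d * sin (d * u))).
Proof.
have := is_deriveZ k (is_derive1_comp (is_derive_cos (d * u)) (is_derive_mull d u)).
by rewrite /GRing.scale /= => H; apply: (is_derive_eq H); ring.
Qed.

Lemma is_derive_eq0_open {g g' : R -> R} {A : set R} : open A ->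
  (forall x : R, is_derive x 1 g (g' x)) -> (forall x, A x -> g x = 0) ->
  forall x, A x -> g' x = 0.
Proof.
move=> oA dg g0 x Ax.
have : is_derive x 1 g 0.
  have cst0 : is_derive x 1 (cst (0 : R)) 0 by exact: is_derive_cst.
  apply: (near_eq_is_derive _ cst0).
  by near=> y; rewrite g0 //; near: y; exact: open_nbhs_nbhs.
by case=> _ <-; have [_ ->] := dg x.
Unshelve. all: end_near.
Qed.

Definition sin_sum (s : seq (R * R)) (n : nat) (u : R) :=
  \sum_(cd <- s) cd.1 * cd.2 ^+ n * sin (cd.2 * u).
Definition cos_sum (s : seq (R * R)) (n : nat) (u : R) :=
  \sum_(cd <- s) cd.1 * cd.2 ^+ n * cos (cd.2 * u).

Lemma is_derive_sin_sum s n (u : R) : is_derive u 1 (sin_sum s n) (cos_sum s n.+1 u).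
Proof.
elim: s => [|[c d] s IH].
  have -> : sin_sum [::] n = cst 0 by apply/funext => v; rewrite /sin_sum big_nil.
  by rewrite /cos_sum big_nil; exact: is_derive_cst.
have -> : sin_sum ((c, d) :: s) n = (fun v => c * d ^+ n * sin (d * v)) + sin_sum s n.
  by apply/funext => v; rewrite /sin_sum big_cons.
rewrite /cos_sum big_cons exprSr mulrA.
by apply: is_deriveD => //; exact: is_derive_sinZ.
Qed.

Lemma is_derive_cos_sum s n (u : R) : is_derive u 1 (cos_sum s n) (- sin_sum s n.+1 u).
Proof.
elim: s => [|[c d] s IH].
  have -> : cos_sum [::] n = cst 0 by apply/funext => v; rewrite /cos_sum big_nil.
  by rewrite /sin_sum big_nil oppr0; exact: is_derive_cst.
have -> : cos_sum ((c, d) :: s) n = (fun v => c * d ^+ n * cos (d * v)) + cos_sum s n.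
  by apply/funext => v; rewrite /cos_sum big_cons.
rewrite /sin_sum big_cons opprD exprSr mulrA.
by apply: is_deriveD => //; exact: is_derive_cosZ.
Qed.

Lemma cos_sum_at0 s n : cos_sum s n 0 = \sum_(cd <- s) cd.1 * cd.2 ^+ n.
Proof. by apply: eq_bigr => cd _; rewrite mulr0 cos0 mulr1. Qed.

Lemma odd_moments_eq0 s : (\forall u \near 0, sin_sum s 0 u = 0) ->
  forall k, \sum_(cd <- s) cd.1 * cd.2 ^+ k.*2.+1 = 0.
Proof.
move=> /nbhs_ballP[e e_gt0 sin_sum0]; pose A := ball (0 : R) e.
have oA : open A := ball_open 0 e.
have even k x : A x -> sin_sum s k.*2 x = 0.
  elim: k x => [|k IH] //.
  have cos0 := is_derive_eq0_open oA (is_derive_sin_sum _ _) IH.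
  move=> x Ax; apply/oppr_inj; rewrite oppr0.
  exact: (is_derive_eq0_open oA (is_derive_cos_sum _ _) cos0).
move=> k; rewrite -cos_sum_at0.
by rewrite (is_derive_eq0_open oA (is_derive_sin_sum _ _) (even k)) //; exact: ballxx.
Qed.
End trigonometric_sums.

Section lebesgue_measure_invariance.
Context {R : realType}.
Local Notation leb := (@lebesgue_measure R).
Local Notation RT := (measurableTypeR R).

Section measure_preserving.
Context {phi : RT -> RT}.
Hypothesis mphi : measurable_fun [set: RT] phi.
Hypothesis phi_preserving :
  forall A : set RT, measurable A -> pushforward leb phi A = leb A.

Let integral_pushforward_leb (F : RT -> \bar R) :
  (\int[pushforward leb phi]_x F x = \int[leb]_x F x)%E.
Proof. by apply: eq_measure_integral => A mA _; exact: phi_preserving. Qed.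

Lemma integrable_comp_preserving (h : RT -> R) :
  leb.-integrable setT (EFin \o h) -> leb.-integrable setT (EFin \o (h \o phi)).
Proof.
move=> /integrableP[/measurable_EFinP mh ih]; apply/integrableP; split.
  exact/measurable_EFinP/measurableT_comp.
have := @ge0_integral_pushforward _ _ RT RT R phi mphi leb setT (fun y => `|(h y)%:E|)%E.
rewrite preimage_setT => <- //.
- by rewrite integral_pushforward_leb.
- exact/measurableT_comp/measurable_EFinP.
Qed.

Lemma Rintegral_comp_preserving (h : RT -> R) :
  leb.-integrable setT (EFin \o h) ->
  \int[leb]_x h (phi x) = \int[leb]_x h x.
Proof.
move=> ih; have /integrableP[/measurable_EFinP mh _] := ih.
rewrite /Rintegral -(integral_pushforward_leb (EFin \o h)).
rewrite (@integral_pushforward _ _ RT RT R phi mphi leb setT (EFin \o h)) ?preimage_setT //.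
- exact/measurable_EFinP.
- exact: integrable_comp_preserving.
Qed.
End measure_preserving.

Lemma lebesgue_measure_subr (a : R) (A : set RT) : measurable A ->
  pushforward leb (fun x : RT => x - a) A = leb A.
Proof.
move=> mA; apply/esym.
have := @lebesgue_measure_unique R (@pushforward _ _ RT RT R leb (fun x => x - a)
  : {measure set RT -> \bar R}).
apply; [exact: measurable_funB| move=> ? _ [[x1 x2] _ <-] |exact: mA].
change (leb `]x1, x2] = leb ((fun x => x - a) @^-1` `]x1, x2])).
have -> : (fun x => x - a) @^-1` `]x1, x2]%classic = `]x1 + a, x2 + a]%classic.
  by apply/seteqP; split => y /=; rewrite !in_itv /= => /andP[? ?]; apply/andP; split; lra.
rewrite !lebesgue_measure_itv /= !lte_fin ltrD2r.
by case: ifP => // _; rewrite -!EFinD; congr EFin; ring.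
Qed.

Let measurable_subr (a : R) : measurable_fun [set: RT] (fun x : RT => x - a).
Proof. exact: measurable_funB. Qed.

Lemma integrable_subr (h : R -> R) (a : R) : leb.-integrable setT (EFin \o h) ->
  leb.-integrable setT (EFin \o (fun x => h (x - a))).
Proof. exact: (integrable_comp_preserving (measurable_subr a) (lebesgue_measure_subr a)). Qed.

Lemma Rintegral_subr (h : R -> R) (a : R) :
  leb.-integrable setT (EFin \o h) -> \int[leb]_x h (x - a) = \int[leb]_x h x.
Proof. exact: (Rintegral_comp_preserving (measurable_subr a) (lebesgue_measure_subr a)). Qed.

Lemma Rintegral_odd (h : R -> R) : leb.-integrable setT (EFin \o h) ->
  (forall x, h (- x) = - h x) -> \int[leb]_x h x = 0.
Proof.
move=> ih hN.
have mN : measurable_fun [set: RT] (fun x : RT => - x) by exact: measurableT_comp.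
have := Rintegral_comp_preserving mN (@lebesgue_measureN R) _ ih.
under eq_Rintegral do rewrite /= hN -mulN1r.
by rewrite RintegralZl // mulN1r; lra.
Qed.
End lebesgue_measure_invariance.

Section integrable_bounded.
Context {R : realType}.
Local Notation leb := (@lebesgue_measure R).

Lemma integrable_bounded_mul (k g : R -> R) : measurable_fun setT k ->
  (forall x, `|k x| <= 1) -> leb.-integrable setT (EFin \o g) ->
  leb.-integrable setT (EFin \o (fun x => k x * g x)).
Proof.
move=> mk k1 ig; have /integrableP[/measurable_EFinP mg _] := ig.
apply: le_integrable ig => //; first exact/measurable_EFinP/measurable_funM.
by move=> x _ /=; rewrite lee_fin normrM -[leRHS]mul1r ler_wpM2r.
Qed.

Lemma integrableZl_EFin (k : R) (g : R -> R) :
  leb.-integrable setT (EFin \o g) ->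
  leb.-integrable setT (EFin \o (fun x => k * g x)).
Proof.
by move=> ig; apply: eq_integrable (integrableZl measurableT k ig).
Qed.

Lemma measurable_fun_mulr (k : R -> R) (u : R) : continuous k ->
  measurable_fun setT (fun x : R => k (x * u)).
Proof.
move=> ck; apply: continuous_measurable_fun => x; apply: continuous_comp; last exact: ck.
by apply: continuousM; [exact: cvg_id|exact: cvg_cst].
Qed.
End integrable_bounded.

Definition cos_transform {R : realType} (f : R -> R) (u : R) :=
  \int[lebesgue_measure]_x (cos (x * u) * f x).

Section symmetric_density.
Context {R : realType}.
Local Notation leb := (@lebesgue_measure R).
Variable f : R -> R.
Hypothesis mf : measurable_fun setT f.
Hypothesis f_ge0 : forall x, 0 <= f x.
Hypothesis f_int1 : (\int[leb]_(x in setT) (f x)%:E = 1)%E.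

Lemma integrable_density : leb.-integrable setT (EFin \o f).
Proof.
apply/integrableP; split; first exact/measurable_EFinP.
under eq_integral do rewrite /= ger0_norm ?lee_fin //.
by rewrite f_int1 ltry.
Qed.

Lemma Rintegral_mul_subr (k : R -> R) (a : R) : measurable_fun setT k ->
  (forall x, `|k x| <= 1) ->
  \int[leb]_x (k x * f (x - a)) = \int[leb]_x (k (x + a) * f x).
Proof.
move=> mk k1; rewrite -[RHS](Rintegral_subr _ a).
  by apply: eq_Rintegral => x _ /=; rewrite subrK.
apply: integrable_bounded_mul integrable_density => //.
exact: measurableT_comp mk (measurable_funD _ _).
Qed.

Lemma Rintegral_mul_mixture (k : R -> R) (p a b : R) : measurable_fun setT k ->
  (forall x, `|k x| <= 1) ->
  \int[leb]_x (k x * mixture f (p, a, b) x) =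
  p * \int[leb]_x (k x * f (x - a)) + (1 - p) * \int[leb]_x (k x * f (x - b)).
Proof.
move=> mk k1.
have ishift c := integrable_bounded_mul _ _ mk k1 (integrable_subr _ c integrable_density).
transitivity (\int[leb]_x (p * (k x * f (x - a)) + (1 - p) * (k x * f (x - b)))).
  by apply: eq_Rintegral => x _ /=; ring.
by rewrite RintegralD ?RintegralZl //; exact: integrableZl_EFin.
Qed.

Let measurable_cosM u : measurable_fun setT (fun x : R => cos (x * u)).
Proof. by apply: measurable_fun_mulr; exact: continuous_cos. Qed.

Let measurable_sinM u : measurable_fun setT (fun x : R => sin (x * u)).
Proof. by apply: measurable_fun_mulr; exact: continuous_sin. Qed.

Let integrable_cosM u : leb.-integrable setT (EFin \o (fun x => cos (x * u) * f x)).
Proof. by apply: integrable_bounded_mul integrable_density => // x; exact: cos_max. Qed.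

Let integrable_sinM u : leb.-integrable setT (EFin \o (fun x => sin (x * u) * f x)).
Proof. by apply: integrable_bounded_mul integrable_density => // x; exact: sin_max. Qed.

Lemma cos_transform0 : cos_transform f 0 = 1.
Proof.
rewrite /cos_transform; under eq_Rintegral do rewrite mulr0 cos0 mul1r.
by rewrite /Rintegral f_int1.
Qed.

Lemma continuous_cos_transform : continuous (cos_transform f).
Proof.
move=> u0.
have cont : {ae leb, forall x : R, setT x ->
    {in `]u0 - 1, u0 + 1[%classic, continuous (fun u : R => cos (x * u) * f x)}}.
  apply: aeW => x _ u _; apply: continuousM; last exact: cvg_cst.
  apply: continuous_comp; last exact: continuous_cos.
  by apply: continuousM; [exact: cvg_cst|exact: cvg_id].
have bound (u : R) : `]u0 - 1, u0 + 1[%classic u ->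
    {ae leb, forall x, setT x -> `|cos (x * u) * f x| <= f x}.
  move=> _; apply: aeW => x _; rewrite normrM (ger0_norm (f_ge0 x)).
  by rewrite ler_piMl // cos_max.
apply: (continuity_under_integral measurableT (fun u _ => integrable_cosM u) cont
  integrable_density bound).
by rewrite inE /= in_itv /=; apply/andP; split; lra.
Qed.

Lemma cos_transform_neq0_near0 : \forall u \near 0, cos_transform f u != 0.
Proof.
apply: cvgr_neq0 (continuous_cos_transform 0) _.
by rewrite cos_transform0 oner_neq0.
Qed.

Hypothesis f_even : forall x, f x = f (- x).

Lemma Rintegral_sin_density u : \int[leb]_x (sin (x * u) * f x) = 0.
Proof.
by apply: Rintegral_odd => // x; rewrite mulNr sinN -f_even mulNr.
Qed.

Lemma Rintegral_cos_subr a u :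
  \int[leb]_x (cos (x * u) * f (x - a)) = cos (a * u) * cos_transform f u.
Proof.
rewrite Rintegral_mul_subr // => [|x]; last exact: cos_max.
transitivity (\int[leb]_x (cos (a * u) * (cos (x * u) * f x)
                             - sin (a * u) * (sin (x * u) * f x))).
  by apply: eq_Rintegral => x _; rewrite mulrDl cosD; ring.
by rewrite RintegralB ?RintegralZl ?Rintegral_sin_density ?mulr0 ?subr0 //;
  exact: integrableZl_EFin.
Qed.

Lemma Rintegral_sin_subr a u :
  \int[leb]_x (sin (x * u) * f (x - a)) = sin (a * u) * cos_transform f u.
Proof.
rewrite Rintegral_mul_subr // => [|x]; last exact: sin_max.
transitivity (\int[leb]_x (cos (a * u) * (sin (x * u) * f x)
                           + sin (a * u) * (cos (x * u) * f x))).
  by apply: eq_Rintegral => x _; rewrite mulrDl sinD; ring.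
by rewrite RintegralD ?RintegralZl ?Rintegral_sin_density ?mulr0 ?add0r //;
  exact: integrableZl_EFin.
Qed.

Lemma fourier_mixture p a b u :
  fourier (mixture f (p, a, b)) u = (Mth (p, a, b) u * (cos_transform f u)%:C)%C.
Proof.
rewrite /fourier !Rintegral_mul_mixture // => [|x|x]; try exact: cos_max; try exact: sin_max.
rewrite !Rintegral_cos_subr !Rintegral_sin_subr /Mth /cexpi /=.
by congr (_ +i* _)%C; rewrite ![u * _]mulrC; ring.
Qed.
End symmetric_density.

Section mixture_characteristic.
Context {R : realType}.

Lemma MthE (p a b u : R) : Mth (p, a, b) u =
  ((p * cos (u * a) + (1 - p) * cos (u * b)) +i*
   (p * sin (u * a) + (1 - p) * sin (u * b)))%C.
Proof. by rewrite /Mth /cexpi /=; congr (_ +i* _)%C; ring. Qed.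

Lemma Mth_norm2_gt0 (p a b u : R) : 0 <= p <= 1 -> p != 2^-1 ->
  0 < complex.Re (Mth (p, a, b) u) ^+ 2 + complex.Im (Mth (p, a, b) u) ^+ 2.
Proof.
move=> /andP[p_ge0 p_le1] p_neq; rewrite MthE /=.
have e1 := cos2Dsin2 (u * a); have e2 := cos2Dsin2 (u * b).
set c1 := cos (u * a) in e1 *; set s1 := sin (u * a) in e1 *.
set c2 := cos (u * b) in e2 *; set s2 := sin (u * b) in e2 *.
have -> : (p * c1 + (1 - p) * c2) ^+ 2 + (p * s1 + (1 - p) * s2) ^+ 2 =
    (1 - 2 * p) ^+ 2 + p * (1 - p) * ((c1 + c2) ^+ 2 + (s1 + s2) ^+ 2).
  apply/eqP; rewrite -subr_eq0; apply/eqP.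
  transitivity (p * (2 * p - 1) * (c1 ^+ 2 + s1 ^+ 2 - 1)
                + (1 - p) * (1 - 2 * p) * (c2 ^+ 2 + s2 ^+ 2 - 1)); first by ring.
  by rewrite e1 e2 subrr !mulr0 addr0.
have sq_gt0 : 0 < (1 - 2 * p) ^+ 2 by rewrite exprn_even_gt0 //; apply/eqP; lra.
have cross_ge0 : 0 <= p * (1 - p) * ((c1 + c2) ^+ 2 + (s1 + s2) ^+ 2).
  by apply: mulr_ge0; [apply: mulr_ge0; lra | rewrite addr_ge0 ?sqr_ge0].
lra.
Qed.

Lemma Mth_neq0 (p a b u : R) : 0 <= p <= 1 -> p != 2^-1 -> Mth (p, a, b) u != 0.
Proof.
move=> p01 p_neq; apply/eqP => M0.
by have := Mth_norm2_gt0 p a b u p01 p_neq; rewrite M0 /= expr0n addr0 ltxx.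
Qed.

Lemma Im_Mth_div (th0 th : R * R * R) (c u : R) :
  complex.Im ((Mth th0 u * c%:C) / Mth th u)%C =
  c * sin_sum (cross_pairs th0 th) 0 u /
  (complex.Re (Mth th u) ^+ 2 + complex.Im (Mth th u) ^+ 2).
Proof.
case: th0 th => [[p0 a0] b0] [[p a] b].
rewrite /sin_sum !big_cons big_nil !MthE /= !expr0 !mulr1 !addr0 !mulrBl !sinB ![_ * u]mulrC.
by rewrite !mulrA; ring.
Qed.
End mixture_characteristic.

Theorem theorem1 (R : realType) (f : R -> R) (Theta : set (R * R * R))
  (th0 : R * R * R) :
  prob_density f -> in_L2 f -> (forall x, f x = f (- x)) ->
  compact Theta ->
  (forall th, Theta th ->
     0 < th.1.1 < 2^-1 /\ th.1.2 != th.2) ->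
  Theta th0 ->
  forall th, Theta th ->
    ((forall u : R, complex.Im (fourier (mixture f th0) u / Mth th u) = 0)
     <-> th = th0).
Proof.
move=> [mf [f_ge0 f_int1]] _ f_even _ Theta_prop th0_in th th_in.
case: th0 th0_in => [[p0 a0] b0] th0_in; case: th th_in => [[p a] b] th_in.
have [p0_range ab0] := Theta_prop _ th0_in.
have [p_range _] := Theta_prop _ th_in.
rewrite /= in p0_range ab0 p_range.
have half_range (q : R) : 0 < q < 2^-1 -> (0 <= q <= 1) && (q != 2^-1).
  by move=> /andP[? ?]; rewrite -andbA; apply/and3P; split; [lra|lra|apply/eqP; lra].
have /andP[p0_01 p0_neq] := half_range _ p0_range.
have /andP[p_01 p_neq] := half_range _ p_range.
split=> [Im0|-> u]; last first.
  by rewrite fourier_mixture // mulrAC divff ?mul1r // Mth_neq0.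
have sin0 : \forall u \near 0, sin_sum (cross_pairs (p0, a0, b0) (p, a, b)) 0 u = 0.
  near=> u; have phi_neq0 : cos_transform f u != 0.
    by near: u; exact: cos_transform_neq0_near0.
  have /eqP := Im0 u; rewrite fourier_mixture // Im_Mth_div.
  rewrite mulf_eq0 invr_eq0 (gt_eqF (Mth_norm2_gt0 _ _ _ _ p_01 p_neq)) orbF.
  by rewrite mulf_eq0 (negPf phi_neq0) => /eqP.
apply/esym/cross_moments_odd_eq0 => //; first by apply/andP; split; lra.
exact: odd_moments_eq0 _ sin0.
Unshelve. all: end_near.
Qed.
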